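(* Let $k\ge 2$ and let $\mathcal H$ be a 3-uniform linear hypergraph containing no Berge cycle of length $2k+1$. Let $\pi$ be a choice function on $\mathcal H$ and let $G_\pi$ be the graph with edge set $\{\pi(E): E\in\mathcal H,\ \pi(E)\ne\emptyset\}$. Let $T$ be a subtree (not necessarily spanning) of $G_\pi$, let $x\in V(T)$, and for $i\ge 0$ let $V_i$ be the set of vertices of $T$ at distance exactly $i$ from $x$ in $T$. Then for every $1\le i\le k$, the induced subgraph $G_\pi[V_i]$ contains no $\Theta$-graph of order $\ell$ for any $\ell\ge 2k$.
   Context: A hypergraph is linear if any two distinct hyperedges share at most one vertex. A Berge cycle of length $m$ is a family of $m$ distinct hyperedges $H_0,\dots,H_{m-1}$ for which there exist distinct vertices $v_0,\dots,v_{m-1}$ with $\{v_i,v_{i+1}\}\subset H_i$ (indices mod $m$). A choice function on $\mathcal H$ is a map $\pi$ assigning to each hyperedge $E$ either a 2-element subset $\pi(E)\subset E$ or $\emptyset$. A $\Theta$-graph of order $\ell$ ($\ell\ge4$) is a cycle of length $\ell$ together with one chord, on exactly $\ell$ vertices. *)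

From mathcomp Require Import all_boot.
Set Implicit Arguments. Unset Strict Implicit. Unset Printing Implicit Defensive.

Section Defs.
Variable V : finType.

Definition uniform3 (H : {set {set V}}) : Prop :=
  forall E, E \in H -> #|E| = 3.

Definition linear_hg (H : {set {set V}}) : Prop :=
  forall E F, E \in H -> F \in H -> E != F -> #|E :&: F| <= 1.

Definition berge_cycle (H : {set {set V}}) (m : nat) : Prop :=
  exists (e : nat -> {set V}) (v : nat -> V),
    [/\ forall i, i < m -> e i \in H,
        forall i j, i < m -> j < m -> e i = e j -> i = j,
        forall i j, i < m -> j < m -> v i = v j -> i = j &
        forall i, i < m -> (v i \in e i) && (v ((i + 1) %% m) \in e i)].

Definition choice_fun (H : {set {set V}}) (pi : {set V} -> {set V}) : Prop :=
  forall E, E \in H -> (pi E \subset E) && ((#|pi E| == 2) || (pi E == set0)).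

Definition Gpi (H : {set {set V}}) (pi : {set V} -> {set V}) : rel V :=
  fun u w => [exists E in H, pi E == [set u; w]] && (u != w).

Definition subtree (G : rel V) (S : {set V}) (t : rel V) : Prop :=
  [/\ forall u w, t u w -> (u \in S) && (w \in S),
      (forall u w, t u w = t w u) /\ (forall u, ~~ t u u),
      forall u w, t u w -> G u w,
      forall u w, u \in S -> w \in S -> connect t u w &
      forall c : seq V, uniq c -> 2 < size c -> ~~ cycle t c].

Definition dist_is (t : rel V) (x y : V) (d : nat) : Prop :=
  (exists p : seq V, [/\ path t x p, last x p = y & size p = d]) /\
  (forall p : seq V, path t x p -> last x p = y -> d <= size p).

Definition layer (S : {set V}) (t : rel V) (x : V) (i : nat) (y : V) : Prop :=
  y \in S /\ dist_is t x y i.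

Definition has_theta (G : rel V) (A : V -> Prop) (l : nat) : Prop :=
  exists w : nat -> V,
    [/\ forall i, i < l -> A (w i),
        forall i j, i < l -> j < l -> w i = w j -> i = j,
        forall i, i < l -> G (w i) (w ((i + 1) %% l)) &
        exists a b, [/\ a < l, b < l, a != b,
                        (b != (a + 1) %% l) && (a != (b + 1) %% l) &
                        G (w a) (w b)]].
End Defs.

(* Let the Θ-graph lie in the layer V_i and let J be the least height at which all its
   vertices have the same ancestor in T.  Put L = 2k+1-2J: L is odd and shorter than the
   cycle of the Θ-graph.  If a path with L edges in the Θ-graph joins two vertices whose
   ancestors at height J-1 differ, then closing it through the two branches of T up to
   their common ancestor gives a cycle of length 2k+1 in G_π, hence a Berge cycle.  So the
   ancestor at height J-1, read along the Θ-graph, is a function F that takes equal values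
   at the two ends of every path with L edges.  Paths along the cycle make F L-periodic;
   paths through the chord (of length d) give further periods among d-1, d+1, 2, and in
   every case F has period 2.  As L is odd, F is constant, contradicting the choice of J. *)

From mathcomp Require Import all_boot zify.
From Stdlib Require Import Classical ClassicalEpsilon.
Set Implicit Arguments. Unset Strict Implicit. Unset Printing Implicit Defensive.

Lemma succ_modn n m : n < m -> (n + 1) %% m = if n.+1 == m then 0 else n.+1.
Proof. by move=> nm; case: eqP => [<- | Sn_neq]; rewrite addn1 ?modnn // modn_small; lia. Qed.

Lemma neq_succ_modn m u v :
  u < m -> v < m -> v != (u + 1) %% m -> v <> u.+1 /\ (u.+1 = m -> v <> 0).
Proof. by move=> um vm; rewrite succ_modn //; case: ifP => /eqP E /eqP; lia. Qed.

Lemma modnDl_window_inj l a y z :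
  y < z + l -> z < y + l -> (a + y) %% l = (a + z) %% l -> y = z.
Proof.
wlog yz : y z / y <= z => [hw yl zl E | yl zl E].
  by have [yz | /ltnW zy] := leqP y z; [apply: hw | rewrite (hw z y zy zl yl (esym E))].
have : l %| (a + z) - (a + y) by rewrite -eqn_mod_dvd ?leq_add2l // E.
by rewrite subnDl => /dvdn_leq; lia.
Qed.

Lemma exists_step_up (P : nat -> Prop) i :
  ~ P 0 -> P i -> exists J, [/\ 0 < J <= i, P J & ~ P J.-1].
Proof.
move=> P0; elim: i => [// | i IH] Pi.
have [Pi' | nPi] := classic (P i); last by exists i.+1; split=> //; lia.
by have [J [/andP[J0 Ji] PJ nPJ]] := IH Pi'; exists J; split=> //; lia.
Qed.

Section Periods.
Variables (T : Type) (F : nat -> T).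

Definition periodic (P : nat) := forall p, F (p + P) = F p.

Lemma periodicM k P : periodic P -> periodic (k * P).
Proof.
move=> FP; elim: k => [|k IH] p; first by rewrite mul0n addn0.
by rewrite mulSn addnA IH FP.
Qed.

Lemma periodicB a b : periodic a -> periodic b -> b <= a -> periodic (a - b).
Proof. by move=> Fa Fb ba p; rewrite -Fb -addnA subnK // Fa. Qed.

Lemma periodic_gcd a b : 0 < a -> periodic a -> periodic b -> periodic (gcdn a b).
Proof.
move=> a0 Fa Fb p; have [c _ /dvdnP[e De]] := Bezoutl b a0.
by rewrite -(periodicM c Fb) -addnA De periodicM.
Qed.

Lemma periodic_coprime_const a b :
  0 < a -> coprime a b -> periodic a -> periodic b -> forall p, F p = F 0.
Proof.
move=> a0 /eqP ab Fa Fb; have F1 := periodic_gcd a0 Fa Fb; rewrite ab in F1.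
by elim=> [|p IH] //; rewrite -addn1 F1.
Qed.

Lemma periodic_window P m c : 0 < P -> periodic P ->
  (forall j, j < P -> F (m + j + c) = F (m + j)) -> periodic c.
Proof.
move=> P0 FP Fc p; set q := p + m * P - m.
have Dp : p + m * P = m + q %% P + q %/ P * P.
  have := divn_eq q P; have : m <= m * P by rewrite leq_pmulr.
  rewrite /q; lia.
rewrite -(periodicM m FP p) -(periodicM m FP (p + c)) (addnAC p c) Dp.
by rewrite (addnAC _ _ c) !periodicM //; apply: Fc; rewrite ltn_mod.
Qed.
End Periods.

Section ChordIdentities.
Variables (T : Type) (F : nat -> T) (l L d : nat).

(* Equalities forced by the walks with [L] edges that use the chord once: [r] steps to the
   chord end [0], arriving from [l - r] ("up") or from [r] ("down"), the chord to [d], and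
   [s] further steps up or down from [d]. *)
Definition chord_up_up :=
  forall r s, r + s = L.-1 -> r + s < l - d -> F (l - r) = F (d + s).
Definition chord_down_down :=
  forall r s, r + s = L.-1 -> r + s < d -> F r = F (d - s).
Definition chord_up_down :=
  forall r s, r + s = L.-1 -> r < l - d -> s < d -> F (l - r) = F (d - s).
Definition chord_down_up :=
  forall r s, r + s = L.-1 -> r < d -> s < l - d -> F r = F (d + s).

Hypotheses (oddL : odd L) (L_lt_l : L < l) (d_ge2 : 2 <= d) (d_le : d + 2 <= l).
Hypotheses (Fl : periodic F l) (FL : periodic F L).

Let Fl_L : periodic F (l - L) := periodicB Fl FL (ltnW L_lt_l).

Let period2_const : periodic F 2 -> forall p, F p = F 0.
Proof. by move=> F2; apply: (periodic_coprime_const _ _ F2 FL); rewrite ?coprime2n. Qed.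

Lemma chord_period_pred : chord_up_up -> L <= l - d -> periodic F (d - 1).
Proof.
move=> up_up Lld; apply: (periodic_window (m := l - L + 1) _ FL) => [|j jL]; first lia.
have -> : l - L + 1 + j = l - (L.-1 - j) by lia.
rewrite (up_up (L.-1 - j) j); try lia.
by rewrite -[in RHS]Fl_L; congr F; lia.
Qed.

Lemma chord_period_succ : chord_down_down -> L <= d -> periodic F (d + 1).
Proof.
move=> down_down Ld; apply: (periodic_window (m := 0) _ FL) => [|j jL]; first lia.
rewrite add0n (down_down j (L.-1 - j)); try lia.
by rewrite -[in RHS]FL; congr F; lia.
Qed.

Lemma chord_const_short : chord_up_up -> chord_down_down -> chord_up_down ->
  chord_down_up -> L <= l - d -> forall p, F p = F 0.
Proof.
move=> up_up down_down up_down down_up Lld; apply: period2_const.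
have Fd1 := chord_period_pred up_up Lld.
have [Ld | dL] := leqP L d.
  have -> : 2 = (d + 1) - (d - 1) by lia.
  by apply: periodicB (chord_period_succ down_down Ld) Fd1 _; lia.
have mirror r : r < d -> F r = F (l - r).
  move=> rd; rewrite (down_up r (L.-1 - r)); try lia.
  by rewrite -(Fd1 (l - r)) -(Fl_L (d + _)); congr F; lia.
have mirror1 e : e < d -> F e.+1 = F (l + 1 - e).
  move=> ed; rewrite -Fl_L (_ : e.+1 + (l - L) = l - (L.-1 - e)); last lia.
  rewrite (up_down (L.-1 - e) e); try lia.
  by rewrite -(Fd1 (l + 1 - e)) -(Fl (d - e)); congr F; lia.
apply: (periodic_window (m := 0) _ Fd1) => [|j jd]; first lia.
rewrite add0n addn2 mirror1; last lia.
by rewrite (mirror j); [congr F; lia | lia].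
Qed.

Lemma chord_const_long : chord_up_down -> chord_down_up -> d < L -> l - d < L ->
  forall p, F p = F 0.
Proof.
move=> up_down down_up dL ldL; apply: period2_const.
have far z : z < l - L -> F (d + 1 + z) = F (l - L - z).
  move=> zl; rewrite (_ : d + 1 + z = l - (l - d - 1 - z)); last lia.
  rewrite (up_down (l - d - 1 - z) (L.-1 - (l - d - 1 - z))); try lia.
  by congr F; lia.
have near z : z < l - L -> F (d - 1 - z) = F z.
  move=> zl; rewrite (down_up (d - 1 - z) (L.-1 - (d - 1 - z))); try lia.
  by rewrite -(FL z); congr F; lia.
apply: (periodic_window (m := d - 1) _ Fl_L) => [|z zl]; first lia.
rewrite (_ : d - 1 + z + 2 = d + 1 + z); last lia.
rewrite far //; case: z zl => [|z] zl.
  by rewrite subn0 addn0 -[d - 1]subn0 near // -(Fl_L 0) add0n.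
rewrite -(near (l - L - z.+1)); last lia.
by rewrite -(Fl_L (d - 1 - _)); congr F; lia.
Qed.
End ChordIdentities.

Lemma chord_const T (F : nat -> T) l L d :
  odd L -> L < l -> 2 <= d -> d + 2 <= l -> periodic F l -> periodic F L ->
  chord_up_up F l L d -> chord_down_down F L d ->
  chord_up_down F l L d -> chord_down_up F l L d -> forall p, F p = F 0.
Proof.
move=> oddL Ll d2 dl Fl FL up_up down_down up_down down_up.
have [Lld | ldL] := leqP L (l - d).
  exact: (chord_const_short oddL Ll d2 dl Fl FL up_up down_down up_down down_up Lld).
have [Ld | dL] := leqP L d; last first.
  exact: (chord_const_long oddL Ll d2 dl Fl FL up_down down_up dL ldL).
(* Seen from the other end of the chord, the roles of the two arcs are exchanged. *)
pose G y := F (d + y).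
have FG p : F p = G (p + l - d) by rewrite /G -(Fl p); congr F; lia.
have GP P : periodic F P -> periodic G P by move=> FP p; rewrite /G addnA FP.
have G_up_up : chord_up_up G l L (l - d).
  move=> r s rs lt; rewrite /G.
  have -> : d + (l - r) = d - r + l by lia.
  have -> : d + (l - d + s) = s + l by lia.
  by rewrite !Fl (down_down s r) //; lia.
have G_down_down : chord_down_down G L (l - d).
  move=> r s rs lt; rewrite /G.
  have -> : d + (l - d - s) = l - s by lia.
  by rewrite (up_up s r) //; lia.
have G_up_down : chord_up_down G l L (l - d).
  move=> r s rs rl sl; rewrite /G.
  have -> : d + (l - r) = d - r + l by lia.
  have -> : d + (l - d - s) = l - s by lia.
  by rewrite Fl (up_down s r) //; lia.
have G_down_up : chord_down_up G l L (l - d).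
  move=> r s rs rl sl; rewrite /G.
  have -> : d + (l - d + s) = s + l by lia.
  by rewrite Fl (down_up s r) //; lia.
have G_const : forall p, G p = G 0.
  apply: (chord_const_short oddL Ll _ _ (GP _ Fl) (GP _ FL) G_up_up G_down_down
            G_up_down G_down_up); lia.
by move=> p; rewrite FG G_const -(G_const (0 + l - d)) -FG.
Qed.

(* A walk in the Θ-graph formed by the cycle Z/l and the chord {0, d}: positions are
   naturals in a window of width l, so that the end 0 of the chord may also appear as l. *)
Definition theta_step (l d p q : nat) : Prop :=
  q = p + 1 \/ p = q + 1 \/ (p = 0 \/ p = l) /\ q = d.

Definition theta_walk (l d L : nat) (o : nat -> nat) : Prop :=
  [/\ forall n m, n <= L -> m <= L -> o n = o m -> n = m,
      forall n m, n <= L -> m <= L -> o n < o m + l &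
      forall n, n < L -> theta_step l d (o n) (o n.+1)].

Definition theta_walk_invariant T (F : nat -> T) (l d L : nat) : Prop :=
  forall o, theta_walk l d L o -> F (o 0) = F (o L).

Section ThetaWalks.
Variables (T : Type) (F : nat -> T) (l d L : nat).
Hypotheses (Finv : theta_walk_invariant F l d L) (L_lt_l : L < l).

Lemma theta_walk_ends (o : nat -> nat) a b :
  theta_walk l d L o -> o 0 = a -> o L = b -> F a = F b.
Proof. by move=> /Finv + <- <-. Qed.

Ltac solve_walk :=
  rewrite /theta_walk /theta_step /=;
  try split=> [n m ? ?|n m ? ?|n ?]; rewrite ?leq0n; repeat case: ifP => ?; lia.

Lemma theta_walk_periodic : periodic F L.
Proof. by move=> p; apply/esym/(theta_walk_ends (o := addn p)); solve_walk. Qed.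

Hypotheses (L_gt0 : 0 < L) (d_ge2 : 2 <= d) (d_le : d + 2 <= l).

Lemma theta_walk_up_up : chord_up_up F l L d.
Proof.
move=> r s rs lt.
by apply: (theta_walk_ends (o := fun n => if n <= r then l - r + n else d + (n - r - 1)));
  solve_walk.
Qed.

Lemma theta_walk_down_down : chord_down_down F L d.
Proof.
move=> r s rs lt.
by apply: (theta_walk_ends (o := fun n => if n <= r then r - n else d - (n - r - 1)));
  solve_walk.
Qed.

Lemma theta_walk_up_down : chord_up_down F l L d.
Proof.
move=> r s rs rl sd.
by apply: (theta_walk_ends (o := fun n => if n <= r then l - r + n else d - (n - r - 1)));
  solve_walk.
Qed.

Lemma theta_walk_down_up : chord_down_up F l L d.
Proof.
move=> r s rs rd sl.
by apply: (theta_walk_ends (o := fun n => if n <= r then r - n else d + (n - r - 1)));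
  solve_walk.
Qed.
End ThetaWalks.

Lemma theta_walk_invariant_const T (F : nat -> T) l d L :
  odd L -> 0 < L -> L < l -> 2 <= d -> d + 2 <= l -> periodic F l ->
  theta_walk_invariant F l d L -> forall p, F p = F 0.
Proof.
move=> oddL L0 Ll d2 dl Fl Finv.
exact: (chord_const oddL Ll d2 dl Fl (theta_walk_periodic Finv Ll)
  (theta_walk_up_up Finv Ll L0 d2 dl) (theta_walk_down_down Finv Ll L0 d2 dl)
  (theta_walk_up_down Finv Ll L0 d2 dl) (theta_walk_down_up Finv Ll L0 d2 dl)).
Qed.

Lemma theta_chord l a b : a < l -> b < l -> a != b ->
  b != (a + 1) %% l -> a != (b + 1) %% l ->
  exists d, [/\ (a + d) %% l = b, 2 <= d & d + 2 <= l].
Proof.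
move=> al bl /eqP ab /(neq_succ_modn al bl) nb /(neq_succ_modn bl al) na.
have [lt | ge] := ltnP a b.
  by exists (b - a); rewrite subnKC ?modn_small; [split | ..]; lia.
exists (b + l - a); rewrite (_ : a + (b + l - a) = b + l); last lia.
by rewrite modnDr modn_small //; split; lia.
Qed.

Section Ancestors.
Variables (V : finType) (t : rel V) (x : V).

Lemma dist_is_unique y n m : dist_is t x y n -> dist_is t x y m -> n = m.
Proof.
move=> [[p [tp py <-]] min_n] [[q [tq qy <-]] min_m].
by apply/eqP; rewrite eqn_leq min_n ?min_m.
Qed.

Lemma dist_is0 y : dist_is t x y 0 -> y = x.
Proof. by case=> [[[|z p] [_ /= <- //]]]. Qed.

Lemma dist_is_pred y n : dist_is t x y n.+1 -> exists2 z, t z y & dist_is t x z n.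
Proof.
case=> [[p [tp py Sp]] min_n]; case/lastP: p tp py Sp => [//|p z].
rewrite rcons_path last_rcons size_rcons => /andP[tp tz] zy [Sp]; subst y.
exists (last x p) => //; split; first by exists p.
move=> p' tp' p'z; have := min_n (rcons p' z).
by rewrite rcons_path tp' p'z tz last_rcons size_rcons => /(_ isT erefl).
Qed.

(* The predecessor of [y] on some shortest path from [x]; a junk value off shortest paths. *)
Definition parent (y : V) : V :=
  epsilon (inhabits y) (fun z => exists n, [/\ dist_is t x y n.+1, t z y & dist_is t x z n]).

Lemma parent_spec y n : dist_is t x y n.+1 -> t (parent y) y /\ dist_is t x (parent y) n.
Proof.
move=> yn; have [z tz zn] := dist_is_pred yn.
have /(epsilon_spec (inhabits y)) : exists z n, [/\ dist_is t x y n.+1, t z y & dist_is t x z n].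
  by exists z, n.
by case=> n' [yn' tp pn']; rewrite (succn_inj (dist_is_unique yn yn')).
Qed.

Definition ancestor (h : nat) (y : V) : V := iter h parent y.

Lemma ancestorD h h' y : ancestor (h + h') y = ancestor h (ancestor h' y).
Proof. exact: iterD. Qed.

Lemma ancestor_dist y i h : dist_is t x y i -> h <= i -> dist_is t x (ancestor h y) (i - h).
Proof.
move=> yi; elim: h => [|h IH] hi; first by rewrite subn0.
have := IH (ltnW hi); rewrite (_ : i - h = (i - h.+1).+1); last lia.
by case/parent_spec.
Qed.

Lemma ancestor_edge y i h : dist_is t x y i -> h < i -> t (ancestor h.+1 y) (ancestor h y).
Proof.
move=> yi hi; have := ancestor_dist yi (ltnW hi).
by rewrite (_ : i - h = (i - h.+1).+1); [case/parent_spec | lia].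
Qed.

Lemma ancestor_root y i : dist_is t x y i -> ancestor i y = x.
Proof. by move/ancestor_dist/(_ (leqnn i)); rewrite subnn => /dist_is0. Qed.
End Ancestors.

Lemma Gpi_sym (V : finType) (H : {set {set V}}) pi : symmetric (Gpi H pi).
Proof. by move=> u w; rewrite /Gpi setUC eq_sym. Qed.

Lemma berge_cycle_of_Gpi_cycle (V : finType) (H : {set {set V}}) pi m (v : nat -> V) :
  choice_fun H pi -> 2 < m ->
  (forall n n', n < m -> n' < m -> v n = v n' -> n = n') ->
  (forall n, n < m -> Gpi H pi (v n) (v ((n + 1) %% m))) ->
  berge_cycle H m.
Proof.
move=> cf m_gt2 v_inj v_adj; pose succ n := (n + 1) %% m.
have succ_lt n : n < m -> succ n < m by move=> _; rewrite ltn_mod; lia.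
pose e n := odflt set0 [pick E in H | pi E == [set v n; v (succ n)]].
have eP n : n < m -> e n \in H /\ pi (e n) = [set v n; v (succ n)].
  move=> nm; have /andP[/existsP[E /andP[EH /eqP piE]] _] := v_adj n nm.
  by rewrite /e; case: pickP => [F /andP[FH /eqP piF] | /(_ E)] //=; rewrite EH piE eqxx.
exists e, v; split=> // [n nm | n n' nm n'm enn' | n nm].
- by case: (eP n nm).
- have [_ pin] := eP n nm; have [_ pin'] := eP n' n'm.
  have /set2P[/v_inj-> // | /v_inj vn] : v n \in [set v n'; v (succ n')].
    by rewrite -pin' -enn' pin set21.
  have /set2P[/v_inj-> // | /v_inj vn'] : v n' \in [set v n; v (succ n)].
    by rewrite -pin enn' pin' set21.
  (* n and n' would be successors of each other on a cycle of length > 2 *)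
  move: (vn nm (succ_lt _ n'm)) (vn' n'm (succ_lt _ nm)).
  by rewrite /succ !succ_modn //; do 2 case: eqP; lia.
- have [eH pie] := eP n nm; have /andP[/subsetP pi_sub _] := cf _ eH.
  by rewrite !pi_sub // pie !inE eqxx ?orbT.
Qed.

Section LayerPathCycle.
Variables (V : finType) (H : {set {set V}}) (pi : {set V} -> {set V}) (t : rel V) (x : V).
Variables (q : nat -> V) (L J i : nat).
Hypotheses (cf : choice_fun H pi) (tG : forall u w, t u w -> Gpi H pi u w).
Hypotheses (L_gt0 : 0 < L) (J_gt0 : 0 < J) (J_le_i : J <= i).
Hypotheses (q_dist : forall n, n <= L -> dist_is t x (q n) i)
  (q_inj : forall n n', n <= L -> n' <= L -> q n = q n' -> n = n')
  (q_adj : forall n, n < L -> Gpi H pi (q n) (q n.+1))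
  (anc_eq : ancestor t x J (q 0) = ancestor t x J (q L))
  (anc_neq : ancestor t x J.-1 (q 0) <> ancestor t x J.-1 (q L)).

Let up h := ancestor t x h (q L).
Let down h := ancestor t x h (q 0).

Let cyc n :=
  if n <= L then q n else if n <= L + J then up (n - L) else down (L + 2 * J - n).
Let height n := if n <= L then 0 else if n <= L + J then n - L else L + 2 * J - n.

Lemma cyc_spec n : n < L + 2 * J ->
  [\/ [/\ n <= L, height n = 0 & cyc n = q n],
      [/\ n = L + height n, 0 < height n <= J & cyc n = up (height n)]
    | [/\ n = L + 2 * J - height n, 0 < height n < J & cyc n = down (height n)]].
Proof.
move=> nm; rewrite /cyc /height; case: ifP => nL; first by constructor 1.
by case: ifP => nLJ; [constructor 2 | constructor 3]; split=> //; lia.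
Qed.

Lemma cyc_depth n : n < L + 2 * J -> dist_is t x (cyc n) (i - height n).
Proof.
move=> nm; case: (cyc_spec nm) => [[nL -> ->] | [_ hJ ->] | [_ hJ ->]].
- by rewrite subn0; apply: q_dist.
- by apply: ancestor_dist; [apply: q_dist | lia].
- by apply: ancestor_dist; [apply: q_dist | lia].
Qed.

Lemma up_neq_down h : h < J -> up h <> down h.
Proof.
move=> hJ E; apply: anc_neq; rewrite /up /down in E.
by rewrite (_ : J.-1 = J.-1 - h + h) ?ancestorD ?E //; lia.
Qed.

Lemma cyc_inj n n' : n < L + 2 * J -> n' < L + 2 * J -> cyc n = cyc n' -> n = n'.
Proof.
move=> nm n'm E.
have height_le k : k < L + 2 * J -> height k <= J by case/cyc_spec=> -[]; lia.
have eh : height n = height n'.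
  have := cyc_depth n'm; rewrite -E => /(dist_is_unique (cyc_depth nm)).
  by have := height_le _ nm; have := height_le _ n'm; lia.
case: (cyc_spec nm) (cyc_spec n'm) E => [[? ? ->]|[? ? ->]|[? ? ->]]
  [[? ? ->]|[? ? ->]|[? ? ->]] E; try lia.
- exact: q_inj.
- by rewrite eh in E; case: (up_neq_down _ E); lia.
- by rewrite eh in E; case: (up_neq_down _ (esym E)); lia.
Qed.

Lemma cyc_up h : h <= J -> cyc (L + h) = up h.
Proof.
rewrite /cyc /up => hJ; case: ifP => hL; last by rewrite ifT ?addKn //; lia.
by rewrite (_ : h = 0) ?addn0 //; lia.
Qed.

Lemma cyc_down h : h <= J -> cyc (L + 2 * J - h) = down h.
Proof.
move=> hJ; have [-> | hlt] := eqVneq h J.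
  by rewrite (_ : L + 2 * J - J = L + J) ?cyc_up //; lia.
by rewrite /cyc !ifF; [congr down | ..]; lia.
Qed.

Lemma cyc_adj n : n < L + 2 * J -> Gpi H pi (cyc n) (cyc ((n + 1) %% (L + 2 * J))).
Proof.
move=> nm; have -> : cyc ((n + 1) %% (L + 2 * J)) = cyc n.+1.
  rewrite succ_modn //; case: eqP => [-> | //].
  by rewrite -[L + 2 * J]subn0 cyc_down // /cyc /down.
have [nL | Ln] := ltnP n L.
  have cq k : k <= L -> cyc k = q k by move=> kL; rewrite /cyc kL.
  by rewrite !cq ?q_adj // ltnW.
have [nLJ | LJn] := ltnP n (L + J).
  have [h -> hJ] : exists2 h, n = L + h & h < J by exists (n - L); lia.
  rewrite -addnS (cyc_up hJ) (cyc_up (ltnW hJ)) Gpi_sym.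
  by apply/tG/(ancestor_edge (q_dist _)); lia.
have [h -> hJ] : exists2 h, n = L + 2 * J - h.+1 & h < J by exists (L + 2 * J - n).-1; lia.
rewrite (_ : (L + 2 * J - h.+1).+1 = L + 2 * J - h); last lia.
rewrite (cyc_down hJ) (cyc_down (ltnW hJ)).
by apply/tG/(ancestor_edge (q_dist _)); lia.
Qed.

Lemma berge_cycle_of_layer_path : berge_cycle H (L + 2 * J).
Proof. by apply: (berge_cycle_of_Gpi_cycle cf _ cyc_inj cyc_adj); lia. Qed.
End LayerPathCycle.



Section ThetaInLayer.
Variables (V : finType) (H : {set {set V}}) (pi : {set V} -> {set V}) (t : rel V) (x : V).
Variables (w : nat -> V) (l a b d i J L : nat).
Hypotheses (cf : choice_fun H pi) (tG : forall u v, t u v -> Gpi H pi u v).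
Hypotheses (L_gt0 : 0 < L) (L_lt_l : L < l) (J_gt0 : 0 < J) (J_le_i : J <= i).
Hypotheses (a_lt_l : a < l) (ad_b : (a + d) %% l = b).
Hypotheses (w_dist : forall j, j < l -> dist_is t x (w j) i)
  (w_inj : forall j j', j < l -> j' < l -> w j = w j' -> j = j')
  (w_adj : forall j, j < l -> Gpi H pi (w j) (w ((j + 1) %% l)))
  (w_chord : Gpi H pi (w a) (w b))
  (w_anc : forall j, j < l -> ancestor t x J (w j) = ancestor t x J (w 0)).

Let pos p := (a + p) %% l.

Lemma theta_step_Gpi p p' : theta_step l d p p' -> Gpi H pi (w (pos p)) (w (pos p')).
Proof.
have pos_succ u : pos (u + 1) = (pos u + 1) %% l by rewrite /pos addnA modnDml.
have pos_lt u : pos u < l by rewrite ltn_mod; lia.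
case=> [-> | [-> | [[->|->] ->]]].
- by rewrite pos_succ w_adj.
- by rewrite Gpi_sym pos_succ w_adj.
- by rewrite /pos addn0 modn_small ?ad_b.
- by rewrite /pos modnDr modn_small ?ad_b.
Qed.

Lemma theta_walk_layer_invariant :
  ~ berge_cycle H (L + 2 * J) ->
  theta_walk_invariant (fun p => ancestor t x J.-1 (w (pos p))) l d L.
Proof.
move=> no_berge o [o_inj o_win o_step].
have [// | neq] := eqVneq (ancestor t x J.-1 (w (pos (o 0))))
                          (ancestor t x J.-1 (w (pos (o L)))).
have pos_lt u : pos u < l by rewrite ltn_mod; lia.
case: no_berge.
apply: (berge_cycle_of_layer_path (x := x) (i := i) (q := fun n => w (pos (o n))) cf tG) => //.
- by move=> n _; apply: w_dist.
- move=> n n' nL n'L /(w_inj (pos_lt _) (pos_lt _)) /modnDl_window_inj E.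
  by apply: o_inj => //; apply: E; apply: o_win.
- by move=> n nL; apply/theta_step_Gpi/o_step.
- by rewrite !w_anc.
- exact/eqP.
Qed.
End ThetaInLayer.

Unset Implicit Arguments.

Theorem lemma5p2 (V : finType) (k : nat) (H : {set {set V}})
    (pi : {set V} -> {set V}) (S : {set V}) (t : rel V) (x : V) :
  2 <= k ->
  uniform3 H -> linear_hg H -> ~ berge_cycle H (2 * k + 1) ->
  choice_fun H pi ->
  subtree (Gpi H pi) S t -> x \in S ->
  forall i l, 1 <= i <= k -> 2 * k <= l ->
    ~ has_theta (Gpi H pi) (layer S t x i) l.
Proof.
move=> k2 _ _ no_berge cf [_ _ tG _ _] _ i l /andP[i1 ik] kl.
case=> w [w_layer w_inj w_adj [a [b [al bl ab /andP[nb na] w_chord]]]].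
have w_dist j : j < l -> dist_is t x (w j) i by case/w_layer.
have [d [ad_b d2 dl]] := theta_chord al bl ab nb na.
pose same_anc h := forall j, j < l -> ancestor t x h (w j) = ancestor t x h (w 0).
have [J [/andP[J0 Ji] sameJ not_same]] : exists J, [/\ 0 < J <= i, same_anc J & ~ same_anc J.-1].
  apply: exists_step_up => [same0 | j jl].
    have l1 : 1 < l by lia.
    by have := w_inj 1 0 l1 (ltnW l1) (same0 1 l1).
  by rewrite !(ancestor_root (w_dist _ _)) //; lia.
pose L := 2 * k + 1 - 2 * J.
pose F p := ancestor t x J.-1 (w ((a + p) %% l)).
have F_const : forall p, F p = F 0.
  apply: (theta_walk_invariant_const (l := l) (d := d) (L := L)); rewrite /L; try lia.
    by move=> p; rewrite /F addnA modnDr.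
  apply: (theta_walk_layer_invariant (i := i) (b := b) cf tG) => //; try lia.
  by rewrite (_ : 2 * k + 1 - 2 * J + 2 * J = 2 * k + 1) //; lia.
apply: not_same => j jl.
have Fw u : u < l -> ancestor t x J.-1 (w u) = F (u + (l - a)).
  by move=> ul; rewrite /F addnCA subnKC ?modnDr ?modn_small //; lia.
by rewrite !Fw ?F_const //; lia.
Qed.
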